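(* (Expressiveness.) The assertion language of IPPL is expressive: for every command $c$ and every assertion $B$ there is an assertion $w[\![c,B]\!]$ such that for every interpretation $I$, $\{\sigma\mid \sigma\models^I w[\![c,B]\!]\}=wp^I[\![c,B]\!]$.
   Context: IPPL: let $\mathbf{Loc}$ be a set of locations $X$, $\mathbf{Intvar}$ a set of integer variables $i$; states are $\sigma:\mathbf{Loc}\to\mathbb{Z}$, interpretations are $I:\mathbf{Intvar}\to\mathbb{Z}$. Arithmetic expressions $a::=n\mid X\mid i\mid a_0+a_1\mid a_0-a_1\mid a_0\times a_1$; Boolean expressions $b::=\mathbf{true}\mid\mathbf{false}\mid a_0=a_1\mid a_0\leq a_1\mid\neg b\mid b_0\wedge b_1\mid b_0\vee b_1$; assertions $A::=\mathbf{true}\mid\mathbf{false}\mid a_0=a_1\mid a_0\leq a_1\mid\neg A\mid A_0\wedge A_1\mid A_0\vee A_1\mid A_0\Rightarrow A_1\mid\forall i.A\mid\exists i.A$, with the usual satisfaction relation $\sigma\models^I A$. Commands: $c::=\mathbf{skip}\mid X:=a\mid c_0;c_1\mid\mathbf{if}\ b\ \mathbf{then}\ c_0\ \mathbf{else}\ c_1\mid\mathbf{while}\ b\ \mathbf{do}\ c\mid c_0\parallel c_1$ (expressions in commands contain no integer variables). Execution $\langle c,\sigma\rangle\rightarrow\sigma'$ is the least relation closed under the standard big-step rules for skip, assignment ($\sigma[X\mapsto$ value of $a$ in $\sigma]$), sequencing, conditional and while loop, together with: if there are states $\sigma'',\sigma'''$ with $\langle c_0,\sigma\rangle\rightarrow\sigma''$,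 $\langle c_1,\sigma''\rangle\rightarrow\sigma'$, $\langle c_1,\sigma\rangle\rightarrow\sigma'''$ and $\langle c_0,\sigma'''\rangle\rightarrow\sigma'$ then $\langle c_0\parallel c_1,\sigma\rangle\rightarrow\sigma'$. The weakest precondition is $wp^I[\![c,B]\!]=\{\sigma\mid$ for all $\sigma'$, if $\langle c,\sigma\rangle\rightarrow\sigma'$ then $\sigma'\models^I B\}$. *)

From Stdlib Require Import ZArith.
Open Scope Z_scope.

Definition Loc := nat.
Definition Intvar := nat.

Definition state := Loc -> Z.
Definition interp := Intvar -> Z.

Inductive aexp : Type :=
| ANum : Z -> aexp
| ALoc : Loc -> aexp
| AVar : Intvar -> aexp
| APlus : aexp -> aexp -> aexp
| AMinus : aexp -> aexp -> aexp
| AMult : aexp -> aexp -> aexp.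

Fixpoint aeval (I : interp) (s : state) (a : aexp) : Z :=
  match a with
  | ANum n => n
  | ALoc X => s X
  | AVar i => I i
  | APlus a0 a1 => aeval I s a0 + aeval I s a1
  | AMinus a0 a1 => aeval I s a0 - aeval I s a1
  | AMult a0 a1 => aeval I s a0 * aeval I s a1
  end.

(* Expressions occurring in commands: no integer variables. *)
Inductive caexp : Type :=
| CNum : Z -> caexp
| CLoc : Loc -> caexp
| CPlus : caexp -> caexp -> caexp
| CMinus : caexp -> caexp -> caexp
| CMult : caexp -> caexp -> caexp.

Fixpoint caeval (s : state) (a : caexp) : Z :=
  match a with
  | CNum n => n
  | CLoc X => s X
  | CPlus a0 a1 => caeval s a0 + caeval s a1
  | CMinus a0 a1 => caeval s a0 - caeval s a1
  | CMult a0 a1 => caeval s a0 * caeval s a1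
  end.

Inductive cbexp : Type :=
| CTrue : cbexp
| CFalse : cbexp
| CEq : caexp -> caexp -> cbexp
| CLe : caexp -> caexp -> cbexp
| CNot : cbexp -> cbexp
| CAnd : cbexp -> cbexp -> cbexp
| COr : cbexp -> cbexp -> cbexp.

Fixpoint cbeval (s : state) (b : cbexp) : bool :=
  match b with
  | CTrue => true
  | CFalse => false
  | CEq a0 a1 => Z.eqb (caeval s a0) (caeval s a1)
  | CLe a0 a1 => Z.leb (caeval s a0) (caeval s a1)
  | CNot b0 => negb (cbeval s b0)
  | CAnd b0 b1 => andb (cbeval s b0) (cbeval s b1)
  | COr b0 b1 => orb (cbeval s b0) (cbeval s b1)
  end.

Inductive assn : Type :=
| ATrue : assn
| AFalse : assn
| AEq : aexp -> aexp -> assn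
| ALe : aexp -> aexp -> assn
| ANot : assn -> assn
| AAnd : assn -> assn -> assn
| AOr : assn -> assn -> assn
| AImp : assn -> assn -> assn
| AForall : Intvar -> assn -> assn
| AExists : Intvar -> assn -> assn.

Definition upd_interp (I : interp) (i : Intvar) (n : Z) : interp :=
  fun j => if Nat.eqb j i then n else I j.

Fixpoint sat (I : interp) (s : state) (A : assn) : Prop :=
  match A with
  | ATrue => True
  | AFalse => False
  | AEq a0 a1 => aeval I s a0 = aeval I s a1
  | ALe a0 a1 => aeval I s a0 <= aeval I s a1
  | ANot A0 => ~ sat I s A0
  | AAnd A0 A1 => sat I s A0 /\ sat I s A1
  | AOr A0 A1 => sat I s A0 \/ sat I s A1
  | AImp A0 A1 => sat I s A0 -> sat I s A1
  | AForall i A0 => forall n : Z, sat (upd_interp I i n) s A0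
  | AExists i A0 => exists n : Z, sat (upd_interp I i n) s A0
  end.

Inductive com : Type :=
| Skip : com
| Assign : Loc -> caexp -> com
| Seq : com -> com -> com
| If : cbexp -> com -> com -> com
| While : cbexp -> com -> com
| Par : com -> com -> com.

Definition upd_state (s : state) (X : Loc) (n : Z) : state :=
  fun Y => if Nat.eqb Y X then n else s Y.

Inductive exec : com -> state -> state -> Prop :=
| E_Skip : forall s, exec Skip s s
| E_Assign : forall s X a, exec (Assign X a) s (upd_state s X (caeval s a))
| E_Seq : forall c0 c1 s s'' s',
    exec c0 s s'' -> exec c1 s'' s' -> exec (Seq c0 c1) s s'
| E_IfTrue : forall b c0 c1 s s',
    cbeval s b = true -> exec c0 s s' -> exec (If b c0 c1) s s'
| E_IfFalse : forall b c0 c1 s s',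
    cbeval s b = false -> exec c1 s s' -> exec (If b c0 c1) s s'
| E_WhileFalse : forall b c s,
    cbeval s b = false -> exec (While b c) s s
| E_WhileTrue : forall b c s s'' s',
    cbeval s b = true -> exec c s s'' -> exec (While b c) s'' s' ->
    exec (While b c) s s'
| E_Par : forall c0 c1 s s'' s''' s',
    exec c0 s s'' -> exec c1 s'' s' ->
    exec c1 s s''' -> exec c0 s''' s' ->
    exec (Par c0 c1) s s'.

Definition wp (I : interp) (c : com) (B : assn) (s : state) : Prop :=
  forall s', exec c s s' -> sat I s' B.

(* Expressiveness is proved by arithmetising the big-step semantics.  A command
   only reads and writes the locations below some bound N, so its execution
   relation is determined by its restriction to the first N locations, and by
   induction on the command this restriction is definable by a first-order
   arithmetic formula.  Sequencing quantifies over the intermediate state, the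
   parallel rule is the conjunction of both sequencings, and a terminating while
   loop is coded by its finite trace of states, which Goedel's beta-function
   packs into a few integers (the Chinese remainder theorem provides them).
   Translating that formula into an assertion whose integer variables M, ...,
   M + N - 1 hold the final state, wp(c, B) is
     forall v. Exec_c(sigma, v) ==> B[v/X]
   where B[v/X] replaces each location X < N by the variable M + X. *)

From Stdlib Require Import ZArith Lia FunctionalExtensionality Znumtheory Factorial.

Local Open Scope Z_scope.

(** * First-order arithmetic with de Bruijn variables *)

Definition env := nat -> Z.

Definition scons {A : Type} (x : A) (g : nat -> A) : nat -> A :=
  fun j => match j with O => x | S j => g j end.

Inductive tm : Type :=
| TVar (n : nat) | TNum (z : Z) | TAdd (a b : tm) | TSub (a b : tm) | TMul (a b : tm).

Fixpoint teval (e : env) (t : tm) : Z :=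
  match t with
  | TVar n => e n
  | TNum z => z
  | TAdd a b => teval e a + teval e b
  | TSub a b => teval e a - teval e b
  | TMul a b => teval e a * teval e b
  end.

Inductive fm : Type :=
| FEq (a b : tm) | FLe (a b : tm) | FNot (f : fm) | FAnd (f g : fm) | FOr (f g : fm)
| FImp (f g : fm) | FEx (f : fm) | FAll (f : fm).

Fixpoint fsat (e : env) (f : fm) : Prop :=
  match f with
  | FEq a b => teval e a = teval e b
  | FLe a b => teval e a <= teval e b
  | FNot f => ~ fsat e f
  | FAnd f g => fsat e f /\ fsat e g
  | FOr f g => fsat e f \/ fsat e g
  | FImp f g => fsat e f -> fsat e g
  | FEx f => exists z, fsat (scons z e) f
  | FAll f => forall z, fsat (scons z e) f
  end.

Definition up_ren (r : nat -> nat) : nat -> nat := scons O (fun j => S (r j)).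

Fixpoint tren (r : nat -> nat) (t : tm) : tm :=
  match t with
  | TVar n => TVar (r n)
  | TNum z => TNum z
  | TAdd a b => TAdd (tren r a) (tren r b)
  | TSub a b => TSub (tren r a) (tren r b)
  | TMul a b => TMul (tren r a) (tren r b)
  end.

Fixpoint fren (r : nat -> nat) (f : fm) : fm :=
  match f with
  | FEq a b => FEq (tren r a) (tren r b)
  | FLe a b => FLe (tren r a) (tren r b)
  | FNot f => FNot (fren r f)
  | FAnd f g => FAnd (fren r f) (fren r g)
  | FOr f g => FOr (fren r f) (fren r g)
  | FImp f g => FImp (fren r f) (fren r g)
  | FEx f => FEx (fren (up_ren r) f)
  | FAll f => FAll (fren (up_ren r) f)
  end.

Lemma teval_ren t e r : teval e (tren r t) = teval (fun j => e (r j)) t.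
Proof. induction t; simpl; congruence. Qed.

Lemma scons_up_ren (z : Z) e r :
  (fun j => scons z e (up_ren r j)) = scons z (fun j => e (r j)).
Proof. apply functional_extensionality; intros [|j]; reflexivity. Qed.

Lemma fsat_ren f : forall e r, fsat e (fren r f) <-> fsat (fun j => e (r j)) f.
Proof.
  induction f; intros e r; simpl; rewrite ?teval_ren;
    try rewrite IHf; try rewrite IHf1, IHf2; try tauto.
  all: setoid_rewrite IHf; setoid_rewrite scons_up_ren; reflexivity.
Qed.

Definition definable (P : env -> Prop) := exists f, forall e, fsat e f <-> P e.

Lemma definable_ext (P Q : env -> Prop) :
  definable P -> (forall e, P e <-> Q e) -> definable Q.
Proof. intros [f Hf] H. exists f. intro e. rewrite Hf. apply H. Qed.

Lemma definable_eq t u : definable (fun e => teval e t = teval e u).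
Proof. exists (FEq t u). reflexivity. Qed.

Lemma definable_le t u : definable (fun e => teval e t <= teval e u).
Proof. exists (FLe t u). reflexivity. Qed.

Lemma definable_not P : definable P -> definable (fun e => ~ P e).
Proof. intros [f Hf]. exists (FNot f). intro; simpl; rewrite Hf; tauto. Qed.

Lemma definable_and P Q : definable P -> definable Q -> definable (fun e => P e /\ Q e).
Proof. intros [f Hf] [g Hg]. exists (FAnd f g). intro; simpl; rewrite Hf, Hg; tauto. Qed.

Lemma definable_or P Q : definable P -> definable Q -> definable (fun e => P e \/ Q e).
Proof. intros [f Hf] [g Hg]. exists (FOr f g). intro; simpl; rewrite Hf, Hg; tauto. Qed.

Lemma definable_imp P Q : definable P -> definable Q -> definable (fun e => P e -> Q e).
Proof. intros [f Hf] [g Hg]. exists (FImp f g). intro; simpl; rewrite Hf, Hg; tauto. Qed.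

Lemma definable_ex P : definable P -> definable (fun e => exists z, P (scons z e)).
Proof.
  intros [f Hf]. exists (FEx f). intro; simpl.
  split; intros [z H]; exists z; apply Hf; auto.
Qed.

Lemma definable_all P : definable P -> definable (fun e => forall z, P (scons z e)).
Proof.
  intros [f Hf]. exists (FAll f). intro; simpl.
  split; intros H z; apply Hf; auto.
Qed.

Lemma definable_ren P r : definable P -> definable (fun e => P (fun j => e (r j))).
Proof. intros [f Hf]. exists (fren r f). intro. rewrite fsat_ren. apply Hf. Qed.

Definition drop (n : nat) (e : env) : env := fun j => e (n + j)%nat.

Definition prepend (n : nat) (v e : env) : env :=
  fun j => if (j <? n)%nat then v j else e (j - n)%nat.

Lemma drop_prepend n v e : drop n (prepend n v e) = e.
Proof.
  apply functional_extensionality; intro j; unfold drop, prepend.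
  destruct (Nat.ltb_spec (n + j) n); [lia | f_equal; lia].
Qed.

Lemma prepend_lt n v e j : (j < n)%nat -> prepend n v e j = v j.
Proof. intro H; unfold prepend. destruct (Nat.ltb_spec j n); [reflexivity | lia]. Qed.

Lemma prepend_succ n v e : prepend (S n) v e = prepend n v (scons (v n) e).
Proof.
  apply functional_extensionality; intro j; unfold prepend, scons.
  destruct (Nat.ltb_spec j (S n)), (Nat.ltb_spec j n); try lia; auto.
  - replace j with n by lia. now rewrite Nat.sub_diag.
  - destruct (j - n)%nat eqn:E; [lia | f_equal; lia].
Qed.

Lemma prepend_ext n v w e :
  (forall j, (j < n)%nat -> v j = w j) -> prepend n v e = prepend n w e.
Proof.
  intro H; apply functional_extensionality; intro j; unfold prepend.
  destruct (Nat.ltb_spec j n); auto.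
Qed.

Lemma definable_forall_lt n (P : nat -> env -> Prop) :
  (forall i, (i < n)%nat -> definable (P i)) ->
  definable (fun e => forall i, (i < n)%nat -> P i e).
Proof.
  induction n as [|n IH]; intro H.
  - apply (definable_ext _ _ (definable_eq (TNum 0) (TNum 0))).
    intro e; split; [intros _ i Hi; lia | reflexivity].
  - apply (definable_ext _ _ (definable_and _ _ (IH (fun i Hi => H i ltac:(lia))) (H n ltac:(lia)))).
    intro e; split.
    + intros [H1 H2] i Hi. destruct (Nat.eq_dec i n); subst; auto. apply H1; lia.
    + intro H1; split; intros; apply H1; lia.
Qed.

Lemma definable_exists_prefix n P :
  definable P -> definable (fun e => exists v, P (prepend n v e)).
Proof.
  revert P; induction n as [|n IH]; intros P HP.
  - apply (definable_ext _ _ HP). intro e.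
    assert (E : forall v, prepend 0 v e = e).
    { intro v; apply functional_extensionality; intro j; unfold prepend; simpl; f_equal; lia. }
    split; [intro H; exists e; rewrite E; auto | intros [v H]; rewrite E in H; auto].
  - apply (definable_ext _ _ (definable_ex _ (IH P HP))). intro e. split.
    + intros [z [v Hv]].
      exists (fun j => if (j <? n)%nat then v j else z).
      rewrite prepend_succ, Nat.ltb_irrefl.
      erewrite prepend_ext; [exact Hv|].
      intros j Hj; simpl; destruct (Nat.ltb_spec j n); [reflexivity | lia].
    + intros [v Hv]. exists (v n), v. rewrite <- prepend_succ. exact Hv.
Qed.

Definition dfun (F : env -> Z) := definable (fun e => e O = F (drop 1 e)).

Lemma dfun_ext F G : dfun F -> (forall e, F e = G e) -> dfun G.
Proof. intros HF H. apply (definable_ext _ _ HF). intro e. now rewrite H. Qed.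

Lemma dfun_term t : dfun (fun e => teval e t).
Proof.
  apply (definable_ext _ _ (definable_eq (TVar 0) (tren S t))).
  intro e. simpl. now rewrite teval_ren.
Qed.

Lemma dfun_drop k F : dfun F -> dfun (fun e => F (drop k e)).
Proof.
  intro HF. apply (definable_ext _ _ (definable_ren _ (scons O (fun j => S (k + j))) HF)).
  reflexivity.
Qed.

Lemma definable_prepend_dfun n P (G : nat -> env -> Z) :
  definable P -> (forall j, (j < n)%nat -> dfun (G j)) ->
  definable (fun e => P (prepend n (fun j => G j e) e)).
Proof.
  intros HP HG.
  assert (HGr : forall j, (j < n)%nat -> definable (fun E => E j = G j (drop n E))).
  { intros j Hj. apply (definable_ext _ _ (definable_ren _ (scons j (fun i => n + i)%nat) (HG j Hj))).
    reflexivity. }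
  apply (definable_ext _ _ (definable_exists_prefix n _
           (definable_and _ _ (definable_forall_lt n _ HGr) HP))).
  intro e; split.
  - intros [v [Hv HPv]]. rewrite drop_prepend in Hv.
    erewrite prepend_ext; [exact HPv|].
    intros j Hj. rewrite <- (prepend_lt n v e j Hj). symmetry. now apply Hv.
  - intro H. exists (fun j => G j e). split; [|exact H].
    intros j Hj. now rewrite drop_prepend, prepend_lt.
Qed.

Lemma definable_rel2 (R : Z -> Z -> Prop) A B :
  definable (fun e => R (e O) (e 1%nat)) -> dfun A -> dfun B ->
  definable (fun e => R (A e) (B e)).
Proof.
  intros HR HA HB.
  apply (definable_ext _ _ (definable_prepend_dfun 2 _ (fun j => match j with O => A | _ => B end) HR
                              ltac:(intros [|[|j]] Hj; simpl; auto; lia))).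
  reflexivity.
Qed.

Lemma dfun_compose2 (g : Z -> Z -> Z) A B :
  definable (fun e => e O = g (e 1%nat) (e 2%nat)) -> dfun A -> dfun B ->
  dfun (fun e => g (A e) (B e)).
Proof.
  intros Hg HA HB.
  set (G := fun j => match j with
                     | O => fun e : env => e O
                     | 1%nat => fun e => A (drop 1 e)
                     | _ => fun e => B (drop 1 e) end).
  apply (definable_ext _ _ (definable_prepend_dfun 3 _ G Hg ltac:(intros [|[|[|j]]] Hj; simpl;
           [apply (dfun_term (TVar 0)) | apply dfun_drop, HA | apply dfun_drop, HB | lia]))).
  reflexivity.
Qed.

(** * Locations used by a command *)

Local Open Scope nat_scope.

Fixpoint caexp_loc_bound (a : caexp) : nat :=
  match a with
  | CNum _ => 0
  | CLoc X => S X
  | CPlus a b | CMinus a b | CMult a b => Nat.max (caexp_loc_bound a) (caexp_loc_bound b)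
  end.

Fixpoint cbexp_loc_bound (b : cbexp) : nat :=
  match b with
  | CTrue | CFalse => 0
  | CEq a0 a1 | CLe a0 a1 => Nat.max (caexp_loc_bound a0) (caexp_loc_bound a1)
  | CNot b => cbexp_loc_bound b
  | CAnd b0 b1 | COr b0 b1 => Nat.max (cbexp_loc_bound b0) (cbexp_loc_bound b1)
  end.

Fixpoint com_loc_bound (c : com) : nat :=
  match c with
  | Skip => 0
  | Assign X a => Nat.max (S X) (caexp_loc_bound a)
  | Seq c0 c1 | Par c0 c1 => Nat.max (com_loc_bound c0) (com_loc_bound c1)
  | If b c0 c1 => Nat.max (cbexp_loc_bound b) (Nat.max (com_loc_bound c0) (com_loc_bound c1))
  | While b c => Nat.max (cbexp_loc_bound b) (com_loc_bound c)
  end.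

Lemma caeval_agree a N s t :
  caexp_loc_bound a <= N -> (forall X, X < N -> s X = t X) -> caeval s a = caeval t a.
Proof.
  intros Ha H; induction a; simpl in *; try (apply H; lia);
    rewrite ?IHa1, ?IHa2 by lia; reflexivity.
Qed.

Lemma cbeval_agree b N s t :
  cbexp_loc_bound b <= N -> (forall X, X < N -> s X = t X) -> cbeval s b = cbeval t b.
Proof.
  intros Hb H; induction b; simpl in *;
    rewrite ?(caeval_agree c N s t), ?(caeval_agree c0 N s t), ?IHb, ?IHb1, ?IHb2 by (auto; lia);
    reflexivity.
Qed.

Lemma exec_beyond c s s' N Y :
  exec c s s' -> com_loc_bound c <= N -> N <= Y -> s' Y = s Y.
Proof.
  intro H; induction H; cbn [com_loc_bound]; intros Hc HX; auto;
    try (rewrite IHexec2, IHexec1 by (cbn [com_loc_bound]; lia); reflexivity);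
    try (apply IHexec; lia).
  unfold upd_state. destruct (Nat.eqb_spec Y X); [lia | reflexivity].
Qed.

Definition merge (N : nat) (t s : state) : state :=
  fun X => if X <? N then s X else t X.

Definition restrict (N : nat) (v : nat -> Z) : state := fun X => if X <? N then v X else 0%Z.

Lemma merge_merge N t s s' : merge N (merge N t s) s' = merge N t s'.
Proof.
  apply functional_extensionality; intro X; unfold merge. now destruct (X <? N).
Qed.

Lemma merge_agree N t s : (forall X, X < N -> t X = s X) -> merge N t s = t.
Proof.
  intro H; apply functional_extensionality; intro X; unfold merge.
  destruct (Nat.ltb_spec X N); auto. symmetry; auto.
Qed.

Lemma merge_below N t s X : X < N -> merge N t s X = s X.
Proof. intro H; unfold merge. destruct (Nat.ltb_spec X N); [reflexivity | lia]. Qed.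

Lemma restrict_below N v X : X < N -> restrict N v X = v X.
Proof. intro H; unfold restrict. destruct (Nat.ltb_spec X N); [reflexivity | lia]. Qed.

Lemma restrict_beyond N v X : N <= X -> restrict N v X = 0%Z.
Proof. intro H; unfold restrict. destruct (Nat.ltb_spec X N); [lia | reflexivity]. Qed.

Lemma restrict_id N s : (forall X, N <= X -> s X = 0%Z) -> restrict N s = s.
Proof.
  intro H; apply functional_extensionality; intro X; unfold restrict.
  destruct (Nat.ltb_spec X N); auto. symmetry; auto.
Qed.

Lemma restrict_ext N v w : (forall X, X < N -> v X = w X) -> restrict N v = restrict N w.
Proof.
  intro H; apply functional_extensionality; intro X; unfold restrict.
  destruct (Nat.ltb_spec X N); auto.
Qed.

Lemma exec_merge c s s' N t :
  exec c s s' -> com_loc_bound c <= N -> (forall X, X < N -> t X = s X) ->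
  exec c t (merge N t s').
Proof.
  intro H; revert t; induction H; cbn [com_loc_bound]; intros t Hc Ht.
  - rewrite merge_agree by auto. constructor.
  - replace (merge N t (upd_state s X (caeval s a))) with (upd_state t X (caeval t a))
      by (apply functional_extensionality; intro Y; unfold merge, upd_state;
          destruct (Nat.ltb_spec Y N), (Nat.eqb_spec Y X); auto;
          [apply (caeval_agree a N) | lia]; auto; lia).
    constructor.
  - apply E_Seq with (merge N t s''); [apply IHexec1; auto; lia|].
    rewrite <- (merge_merge N t s'' s'). apply IHexec2; [lia|].
    intros; apply merge_below; auto.
  - apply E_IfTrue; [rewrite (cbeval_agree b N t s) by (auto; lia); auto | apply IHexec; auto; lia].
  - apply E_IfFalse; [rewrite (cbeval_agree b N t s) by (auto; lia); auto | apply IHexec; auto; lia].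
  - rewrite merge_agree by auto. apply E_WhileFalse.
    rewrite (cbeval_agree b N t s) by (auto; lia); auto.
  - apply E_WhileTrue with (merge N t s''); [rewrite (cbeval_agree b N t s) by (auto; lia); auto
                                             | apply IHexec1; auto; lia |].
    rewrite <- (merge_merge N t s'' s'). apply IHexec2; [simpl; lia|].
    intros; apply merge_below; auto.
  - apply E_Par with (merge N t s'') (merge N t s''').
    + apply IHexec1; auto; lia.
    + rewrite <- (merge_merge N t s'' s'). apply IHexec2; [lia|]. intros; apply merge_below; auto.
    + apply IHexec3; auto; lia.
    + rewrite <- (merge_merge N t s''' s'). apply IHexec4; [lia|]. intros; apply merge_below; auto.
Qed.

Lemma exec_restrict_iff c N s s' :
  com_loc_bound c <= N ->
  exec c s s' <-> (forall X, N <= X -> s' X = s X) /\ exec c (restrict N s) (restrict N s').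
Proof.
  intro Hc; split.
  - intro H; split; [intros; eapply exec_beyond; eauto|].
    replace (restrict N s') with (merge N (restrict N s) s').
    + apply exec_merge with s; auto. intros; apply restrict_below; auto.
    + apply functional_extensionality; intro X; unfold merge, restrict. now destruct (X <? N).
  - intros [Hout H]. replace s' with (merge N s (restrict N s')).
    + apply exec_merge with (restrict N s); auto. intros; symmetry; apply restrict_below; auto.
    + apply functional_extensionality; intro X; unfold merge, restrict.
      destruct (Nat.ltb_spec X N); auto. symmetry; apply Hout; lia.
Qed.

Lemma exec_seq_iff c0 c1 N s t :
  com_loc_bound c0 <= N -> (forall X, N <= X -> s X = 0%Z) ->
  exec (Seq c0 c1) s t <-> exists v, exec c0 s (restrict N v) /\ exec c1 (restrict N v) t.
Proof.
  intros Hc Hs; split.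
  - intro H; inversion H as [| |? ? ? s'' ? H0 H1| | | | |]; subst. exists s''.
    rewrite restrict_id; auto. intros X HX. rewrite (exec_beyond c0 s s'' N X); auto.
  - intros [v [H0 H1]]. econstructor; eauto.
Qed.

Lemma exec_if_iff b c0 c1 s t :
  exec (If b c0 c1) s t <->
  (cbeval s b = true /\ exec c0 s t) \/ (~ cbeval s b = true /\ exec c1 s t).
Proof.
  rewrite Bool.not_true_iff_false. split.
  - intro H; inversion H; subst; auto.
  - intros [[H0 H1] | [H0 H1]]; [apply E_IfTrue | apply E_IfFalse]; auto.
Qed.

Lemma exec_par_iff c0 c1 s t :
  exec (Par c0 c1) s t <-> exec (Seq c0 c1) s t /\ exec (Seq c1 c0) s t.
Proof.
  split.
  - intro H; inversion H; subst. split; econstructor; eauto.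
  - intros [H0 H1]. inversion H0; inversion H1; subst. econstructor; eauto.
Qed.

Lemma exec_while_iff_trace b c s s' :
  exec (While b c) s s' <->
  exists k (tr : nat -> state), tr 0 = s /\ tr k = s' /\
    (forall t, t < k -> cbeval (tr t) b = true /\ exec c (tr t) (tr (S t))) /\
    cbeval (tr k) b = false.
Proof.
  split.
  - intro H. remember (While b c) as w eqn:Hw.
    induction H; inversion Hw; subst.
    + exists 0, (fun _ => s). repeat split; auto; intros; lia.
    + destruct (IHexec2 eq_refl) as [k [tr [Htr0 [Hk [Hstep Hend]]]]].
      exists (S k), (scons s tr). split; [reflexivity|]. split; [exact Hk|].
      split; [|exact Hend].
      intros [|u] Hu; simpl; [subst; auto | apply Hstep; lia].
  - intros [k [tr [H0 [Hk [Hstep Hend]]]]]. subst.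
    revert tr Hstep Hend. induction k as [|k IH]; intros tr Hstep Hend.
    + apply E_WhileFalse; auto.
    + apply E_WhileTrue with (tr 1); try apply Hstep; try lia.
      apply (IH (fun t => tr (S t))); auto. intros t Ht; apply Hstep; lia.
Qed.

(** * Definability of the execution relation *)

Local Open Scope Z_scope.

Definition state_dfun (N : nat) (S : env -> state) :=
  (forall e X, (N <= X)%nat -> S e X = 0) /\ (forall X, (X < N)%nat -> dfun (fun e => S e X)).

Lemma state_dfun_restrict N k : state_dfun N (fun e => restrict N (drop k e)).
Proof.
  split; [intros; apply restrict_beyond; auto|].
  intros X HX. apply (dfun_ext _ _ (dfun_term (TVar (k + X)))).
  intro e. rewrite restrict_below; auto.
Qed.

Lemma state_dfun_drop N S k : state_dfun N S -> state_dfun N (fun e => S (drop k e)).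
Proof. intros [Hout HS]; split; [auto | intros X HX; apply (dfun_drop k _ (HS X HX))]. Qed.

Lemma state_dfun_upd N S X A :
  state_dfun N S -> (X < N)%nat -> dfun A -> state_dfun N (fun e => upd_state (S e) X (A e)).
Proof.
  intros [Hout HS] HX HA; split; unfold upd_state.
  - intros e Y HY. destruct (Nat.eqb_spec Y X); [lia | auto].
  - intros Y HY. destruct (Nat.eqb_spec Y X); [exact HA | exact (HS Y HY)].
Qed.

Lemma dfun_caeval N S a :
  state_dfun N S -> (caexp_loc_bound a <= N)%nat -> dfun (fun e => caeval (S e) a).
Proof.
  intros [_ HS] Ha; induction a; cbn [caexp_loc_bound caeval] in *.
  - apply (dfun_term (TNum z)).
  - apply HS; lia.
  - apply (dfun_compose2 Z.add _ _ (definable_eq (TVar 0) (TAdd (TVar 1) (TVar 2))));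
      [apply IHa1 | apply IHa2]; lia.
  - apply (dfun_compose2 Z.sub _ _ (definable_eq (TVar 0) (TSub (TVar 1) (TVar 2))));
      [apply IHa1 | apply IHa2]; lia.
  - apply (dfun_compose2 Z.mul _ _ (definable_eq (TVar 0) (TMul (TVar 1) (TVar 2))));
      [apply IHa1 | apply IHa2]; lia.
Qed.

Lemma definable_cbeval N S b :
  state_dfun N S -> (cbexp_loc_bound b <= N)%nat -> definable (fun e => cbeval (S e) b = true).
Proof.
  intros HS Hb; induction b; cbn [cbexp_loc_bound cbeval] in *.
  - apply (definable_ext _ _ (definable_eq (TNum 0) (TNum 0))). tauto.
  - apply (definable_ext _ _ (definable_not _ (definable_eq (TNum 0) (TNum 0)))).
    intro e; simpl; split; [tauto | discriminate].
  - apply (definable_ext _ _ (definable_rel2 eq _ _ (definable_eq (TVar 0) (TVar 1))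
                                (dfun_caeval N S c HS ltac:(lia)) (dfun_caeval N S c0 HS ltac:(lia)))).
    intro e. now rewrite Z.eqb_eq.
  - apply (definable_ext _ _ (definable_rel2 Z.le _ _ (definable_le (TVar 0) (TVar 1))
                                (dfun_caeval N S c HS ltac:(lia)) (dfun_caeval N S c0 HS ltac:(lia)))).
    intro e. now rewrite Z.leb_le.
  - apply (definable_ext _ _ (definable_not _ (IHb Hb))).
    intro e. rewrite Bool.negb_true_iff, Bool.not_true_iff_false. reflexivity.
  - apply (definable_ext _ _ (definable_and _ _ (IHb1 ltac:(lia)) (IHb2 ltac:(lia)))).
    intro e. now rewrite Bool.andb_true_iff.
  - apply (definable_ext _ _ (definable_or _ _ (IHb1 ltac:(lia)) (IHb2 ltac:(lia)))).
    intro e. now rewrite Bool.orb_true_iff.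
Qed.

Lemma definable_state_eq N S T : state_dfun N S -> state_dfun N T -> definable (fun e => S e = T e).
Proof.
  intros [HS0 HS] [HT0 HT].
  apply (definable_ext _ _ (definable_forall_lt N (fun X e => S e X = T e X)
           (fun X HX => definable_rel2 eq _ _ (definable_eq (TVar 0) (TVar 1)) (HS X HX) (HT X HX)))).
  intro e; split; [|intros ->; auto].
  intro H; apply functional_extensionality; intro X.
  destruct (Nat.lt_ge_cases X N); [auto | rewrite HS0, HT0; auto].
Qed.

(* Quantifying over all definable pre- and post-states, rather than fixing
   them to two blocks of variables, is what lets sequencing and loops plug in
   intermediate states. *)
Definition exec_definable (N : nat) (c : com) :=
  forall S T, state_dfun N S -> state_dfun N T -> definable (fun e => exec c (S e) (T e)).

Lemma exec_definable_skip N : exec_definable N Skip.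
Proof.
  intros S T HS HT. apply (definable_ext _ _ (definable_state_eq N S T HS HT)).
  intro e; split; [intros ->; constructor | intro H; now inversion H].
Qed.

Lemma exec_definable_assign N X a :
  (X < N)%nat -> (caexp_loc_bound a <= N)%nat -> exec_definable N (Assign X a).
Proof.
  intros HX Ha S T HS HT.
  apply (definable_ext _ _ (definable_state_eq N _ T
           (state_dfun_upd N S X _ HS HX (dfun_caeval N S a HS Ha)) HT)).
  intro e; split; [intros <-; constructor | intro H; now inversion H].
Qed.

Lemma exec_definable_if N b c0 c1 :
  (cbexp_loc_bound b <= N)%nat -> exec_definable N c0 -> exec_definable N c1 ->
  exec_definable N (If b c0 c1).
Proof.
  intros Hb H0 H1 S T HS HT.
  pose proof (definable_cbeval N S b HS Hb) as Hguard.
  apply (definable_ext _ _ (definable_or _ _ (definable_and _ _ Hguard (H0 S T HS HT))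
                              (definable_and _ _ (definable_not _ Hguard) (H1 S T HS HT)))).
  intro e. symmetry. apply exec_if_iff.
Qed.

Lemma exec_definable_seq N c0 c1 :
  (com_loc_bound c0 <= N)%nat -> exec_definable N c0 -> exec_definable N c1 ->
  exec_definable N (Seq c0 c1).
Proof.
  intros Hc H0 H1 S T HS HT.
  pose proof (state_dfun_restrict N 0) as Hmid.
  apply (definable_ext _ _ (definable_exists_prefix N _
           (definable_and _ _ (H0 _ _ (state_dfun_drop N S N HS) Hmid)
                              (H1 _ _ Hmid (state_dfun_drop N T N HT))))).
  intro e. rewrite (exec_seq_iff c0 c1 N) by (auto; apply (proj1 HS)).
  assert (Hst : forall v, restrict N (drop 0 (prepend N v e)) = restrict N v).
  { intro v. apply restrict_ext. intros X HX. apply prepend_lt, HX. }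
  setoid_rewrite Hst. setoid_rewrite drop_prepend. reflexivity.
Qed.

Lemma exec_definable_par N c0 c1 :
  (com_loc_bound c0 <= N)%nat -> (com_loc_bound c1 <= N)%nat ->
  exec_definable N c0 -> exec_definable N c1 -> exec_definable N (Par c0 c1).
Proof.
  intros Hc0 Hc1 H0 H1 S T HS HT.
  apply (definable_ext _ _ (definable_and _ _ (exec_definable_seq N c0 c1 Hc0 H0 H1 S T HS HT)
                                              (exec_definable_seq N c1 c0 Hc1 H1 H0 S T HS HT))).
  intro e. symmetry. apply exec_par_iff.
Qed.

(** * Goedel's beta-function *)

Fixpoint prod_upto (d : nat -> Z) (m : nat) : Z :=
  match m with O => 1 | S m => prod_upto d m * d m end.

Lemma divide_prod_upto d m i : (i < m)%nat -> (d i | prod_upto d m).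
Proof.
  induction m as [|m IH]; intro Hi; [lia|]. simpl.
  destruct (Nat.eq_dec i m) as [->|Hne].
  - apply Z.divide_mul_r, Z.divide_refl.
  - apply Z.divide_mul_l, IH; lia.
Qed.

Lemma rel_prime_prod_upto d m x :
  (forall i, (i < m)%nat -> rel_prime (d i) x) -> rel_prime (prod_upto d m) x.
Proof.
  induction m as [|m IH]; intro H; simpl; [apply rel_prime_1|].
  apply rel_prime_sym, rel_prime_mult; apply rel_prime_sym; [apply IH | apply H]; auto.
Qed.

Lemma chinese_remainder (d f : nat -> Z) m :
  (forall i j, (i < j < m)%nat -> rel_prime (d i) (d j)) ->
  (forall i, (i < m)%nat -> 0 <= f i < d i) ->
  exists a, forall i, (i < m)%nat -> a mod d i = f i.
Proof.
  induction m as [|m IH]; intros Hcop Hf; [exists 0; intros; lia|].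
  destruct IH as [a Ha]; [intros; apply Hcop; lia | intros; apply Hf; lia |].
  destruct (rel_prime_bezout _ _ (rel_prime_prod_upto d m (d m) (fun i Hi => Hcop i m ltac:(lia))))
    as [u v Huv].
  (* [prod_upto d m * u] is 0 modulo every earlier [d i] and 1 modulo [d m]. *)
  exists (a + prod_upto d m * u * (f m - a)). intros i Hi.
  assert (Hdi : 0 < d i) by (specialize (Hf i Hi); lia).
  destruct (Nat.eq_dec i m) as [->|Hne].
  - replace (a + prod_upto d m * u * (f m - a)) with (f m + (- v * (f m - a)) * d m)
      by (replace (prod_upto d m * u) with (1 - v * d m) by lia; ring).
    rewrite Z.mod_add by lia. apply Z.mod_small, Hf; lia.
  - destruct (divide_prod_upto d m i ltac:(lia)) as [q ->].
    replace (a + q * d i * u * (f m - a)) with (a + (q * u * (f m - a)) * d i) by ring.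
    rewrite Z.mod_add by lia. apply Ha; lia.
Qed.

Lemma divide_fact n d : (1 <= d <= n)%nat -> (Z.of_nat d | Z.of_nat (fact n)).
Proof.
  induction n as [|n IH]; intro Hd; [lia|].
  change (fact (S n)) with (S n * fact n)%nat. rewrite Nat2Z.inj_mul.
  destruct (Nat.eq_dec d (S n)) as [->|Hne].
  - apply Z.divide_mul_l, Z.divide_refl.
  - apply Z.divide_mul_r, IH; lia.
Qed.

(* Total remainder: a non-positive modulus gives 0, so that the graph is
   definable for every modulus. *)
Definition zmod (a d : Z) : Z := if 0 <? d then a mod d else 0.

(* Shifted by [c] so that negative values can be stored. *)
Definition beta (a b c i : Z) : Z := zmod a (1 + (i + 1) * b) - c.

Lemma beta_moduli_coprime b m i j :
  (Z.of_nat (fact m) | b) -> (i < j < m)%nat ->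
  rel_prime (1 + (Z.of_nat i + 1) * b) (1 + (Z.of_nat j + 1) * b).
Proof.
  (* A common divisor divides [j - i], hence [m!], hence [b], hence 1. *)
  intros Hb Hij. apply Zis_gcd_intro; try apply Z.divide_1_l.
  intros x Hxi Hxj.
  assert (Hx : (x | Z.of_nat (j - i))).
  { replace (Z.of_nat (j - i)) with ((Z.of_nat j + 1) * (1 + (Z.of_nat i + 1) * b)
                                     - (Z.of_nat i + 1) * (1 + (Z.of_nat j + 1) * b))
      by (rewrite Nat2Z.inj_sub by lia; ring).
    apply Z.divide_sub_r; apply Z.divide_mul_r; assumption. }
  assert (Hxb : (x | b)).
  { apply (Z.divide_trans _ _ _ Hx).
    apply (Z.divide_trans _ _ _ (divide_fact m (j - i) ltac:(lia)) Hb). }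
  replace 1 with ((1 + (Z.of_nat i + 1) * b) - (Z.of_nat i + 1) * b) by ring.
  apply Z.divide_sub_r; [assumption | apply Z.divide_mul_r, Hxb].
Qed.

Lemma finite_abs_bound m (f : nat -> Z) :
  exists K, 0 <= K /\ forall j, (j < m)%nat -> Z.abs (f j) <= K.
Proof.
  induction m as [|m [K [HK Hf]]]; [exists 0; split; intros; lia|].
  exists (Z.max K (Z.abs (f m))). split; [lia|].
  intros j Hj. destruct (Nat.eq_dec j m) as [->|Hne]; [lia|]. specialize (Hf j ltac:(lia)). lia.
Qed.

Lemma beta_lemma m (f : nat -> Z) :
  exists a b c, forall j, (j < m)%nat -> beta a b c (Z.of_nat j) = f j.
Proof.
  destruct (finite_abs_bound m f) as [K [HK Hf]].
  (* A multiple of [m!], for coprime moduli, exceeding [2K], for room for [f j + K]. *)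
  set (b := Z.of_nat (fact m) * (2 * K + 1)).
  assert (Hb : 2 * K + 1 <= b) by (pose proof (lt_O_fact m); unfold b; nia).
  destruct (chinese_remainder (fun j => 1 + (Z.of_nat j + 1) * b) (fun j => f j + K) m) as [a Ha].
  - intros i j Hij. apply (beta_moduli_coprime b m); [apply Z.divide_factor_l | exact Hij].
  - intros j Hj. specialize (Hf j Hj). nia.
  - exists a, b, K. intros j Hj. unfold beta, zmod.
    destruct (Z.ltb_spec 0 (1 + (Z.of_nat j + 1) * b)); [|nia].
    rewrite Ha by exact Hj. ring.
Qed.

(* Location [X] at time [t] of a coded run is stored at beta-index [t * N + X]. *)
Definition coded_state (N : nat) (a b c t : Z) : state :=
  restrict N (fun X => beta a b c (t * Z.of_nat N + Z.of_nat X)).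

Lemma trace_coded N k (tr : nat -> state) :
  (forall t X, (t <= k)%nat -> (N <= X)%nat -> tr t X = 0) ->
  exists a b c, forall t, (t <= k)%nat -> coded_state N a b c (Z.of_nat t) = tr t.
Proof.
  intro Hout.
  destruct (beta_lemma (S k * N) (fun j => tr (j / N)%nat (j mod N)%nat)) as [a [b [c Hbeta]]].
  exists a, b, c. intros t Ht.
  rewrite <- (restrict_id N (tr t)) by auto. apply restrict_ext. intros X HX.
  replace (Z.of_nat t * Z.of_nat N + Z.of_nat X) with (Z.of_nat (t * N + X)) by lia.
  rewrite Hbeta by nia.
  rewrite Nat.div_add_l, Nat.div_small, Nat.add_0_r by lia.
  rewrite Nat.add_comm, Nat.Div0.mod_add, Nat.mod_small by lia.
  reflexivity.
Qed.

Lemma exec_while_iff_coded N b c s s' :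
  (com_loc_bound c <= N)%nat -> (forall X, (N <= X)%nat -> s X = 0) ->
  exec (While b c) s s' <->
  exists k a bb cc, 0 <= k /\ coded_state N a bb cc 0 = s /\ coded_state N a bb cc k = s' /\
    (forall z, 0 <= z < k ->
       cbeval (coded_state N a bb cc z) b = true /\
       exec c (coded_state N a bb cc z) (coded_state N a bb cc (z + 1))) /\
    ~ cbeval (coded_state N a bb cc k) b = true.
Proof.
  intros Hc Hs. rewrite exec_while_iff_trace. split.
  - intros [k [tr [Htr0 [Hk [Hstep Hend]]]]].
    assert (Hout : forall t X, (t <= k)%nat -> (N <= X)%nat -> tr t X = 0).
    { induction t as [|t IH]; intros X Ht HX; [subst; auto|].
      rewrite (exec_beyond c (tr t) (tr (S t)) N X); auto; [apply IH | apply Hstep]; lia. }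
    destruct (trace_coded N k tr Hout) as [a [bb [cc Hfr]]].
    exists (Z.of_nat k), a, bb, cc.
    split; [lia|]. split; [rewrite <- Htr0; apply (Hfr 0%nat); lia|].
    split; [rewrite <- Hk; apply Hfr; lia|].
    split; [|rewrite Hfr, Hend by lia; discriminate].
    intros z Hz. rewrite <- (Z2Nat.id z) by lia.
    replace (Z.of_nat (Z.to_nat z) + 1) with (Z.of_nat (S (Z.to_nat z))) by lia.
    rewrite !Hfr by lia. apply Hstep. lia.
  - intros [k [a [bb [cc [Hk [H0 [Hk' [Hstep Hend]]]]]]]].
    exists (Z.to_nat k), (fun t => coded_state N a bb cc (Z.of_nat t)).
    split; [exact H0|]. rewrite Z2Nat.id by lia. split; [exact Hk'|].
    split; [|now apply Bool.not_true_iff_false].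
    intros t Ht. rewrite Nat2Z.inj_succ. apply Hstep. lia.
Qed.

Lemma definable_zmod_graph : definable (fun e => e 0%nat = zmod (e 1%nat) (e 2%nat)).
Proof.
  exists (FOr (FAnd (FLe (TNum 1) (TVar 2))
                    (FEx (FAnd (FEq (TVar 2) (TAdd (TMul (TVar 0) (TVar 3)) (TVar 1)))
                               (FAnd (FLe (TNum 0) (TVar 1)) (FLe (TAdd (TVar 1) (TNum 1)) (TVar 3))))))
              (FAnd (FLe (TVar 2) (TNum 0)) (FEq (TVar 0) (TNum 0)))).
  intro e; simpl; unfold zmod.
  destruct (Z.ltb_spec 0 (e 2%nat)) as [Hd|Hd]; split.
  - intros [[_ [q [Hq Hr]]] | [? _]]; [|lia].
    apply (Z.mod_unique_pos _ _ q); lia.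
  - intro Hr. left. split; [lia|]. exists (e 1%nat / e 2%nat).
    pose proof (Z.div_mod (e 1%nat) (e 2%nat)). pose proof (Z.mod_pos_bound (e 1%nat) (e 2%nat)). lia.
  - intros [[? _] | [_ ?]]; lia.
  - intro; right; lia.
Qed.

Lemma state_dfun_coded N A B C T :
  dfun A -> dfun B -> dfun C -> dfun T ->
  state_dfun N (fun e => coded_state N (A e) (B e) (C e) (T e)).
Proof.
  intros HA HB HC HT. split; [intros; apply restrict_beyond; auto|].
  intros X HX.
  apply (dfun_ext (fun e => beta (A e) (B e) (C e) (T e * Z.of_nat N + Z.of_nat X)));
    [|intro e; symmetry; apply restrict_below, HX].
  apply (dfun_compose2 Z.sub); [apply (definable_eq (TVar 0) (TSub (TVar 1) (TVar 2))) | | exact HC].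
  apply (dfun_compose2 zmod); [exact definable_zmod_graph | exact HA |].
  apply (dfun_compose2 (fun t b => 1 + (t * Z.of_nat N + Z.of_nat X + 1) * b)); [|exact HT | exact HB].
  apply (definable_eq (TVar 0) (TAdd (TNum 1) (TMul (TAdd (TAdd (TMul (TVar 1) (TNum (Z.of_nat N)))
                                                              (TNum (Z.of_nat X))) (TNum 1)) (TVar 2)))).
Qed.

Lemma exec_definable_while N b c :
  (cbexp_loc_bound b <= N)%nat -> (com_loc_bound c <= N)%nat -> exec_definable N c ->
  exec_definable N (While b c).
Proof.
  intros Hb Hc Hbody S T HS HT.
  assert (Hcoded : forall i j l t, state_dfun N (fun E => coded_state N (E i) (E j) (E l) (teval E t)))
    by (intros; apply state_dfun_coded;
        [apply (dfun_term (TVar i)) | apply (dfun_term (TVar j)) | apply (dfun_term (TVar l))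
        | apply dfun_term]).
  (* Under the binders [exists k a b c] the slots 0-3 hold [c, b, a, k];
     inside [Step] the time [z] is pushed in front of them. *)
  set (Step := fun E : env =>
    0 <= E 0%nat < E 4%nat ->
    cbeval (coded_state N (E 3%nat) (E 2%nat) (E 1%nat) (E 0%nat)) b = true /\
    exec c (coded_state N (E 3%nat) (E 2%nat) (E 1%nat) (E 0%nat))
           (coded_state N (E 3%nat) (E 2%nat) (E 1%nat) (E 0%nat + 1))).
  assert (HStep : definable Step).
  { apply definable_imp.
    - apply (definable_ext _ _ (definable_and _ _ (definable_le (TNum 0) (TVar 0))
                                  (definable_le (TAdd (TVar 0) (TNum 1)) (TVar 4)))).
      intro e; simpl; lia.
    - apply definable_and; [apply (definable_cbeval N _ b (Hcoded 3 2 1 (TVar 0))%nat Hb)|].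
      apply (Hbody _ _ (Hcoded 3 2 1 (TVar 0))%nat (Hcoded 3 2 1 (TAdd (TVar 0) (TNum 1)))%nat). }
  set (Run := fun E : env =>
    0 <= E 3%nat /\
    coded_state N (E 2%nat) (E 1%nat) (E 0%nat) 0 = S (drop 4 E) /\
    coded_state N (E 2%nat) (E 1%nat) (E 0%nat) (E 3%nat) = T (drop 4 E) /\
    (forall z, Step (scons z E)) /\
    ~ cbeval (coded_state N (E 2%nat) (E 1%nat) (E 0%nat) (E 3%nat)) b = true).
  assert (HRun : definable Run).
  { repeat apply definable_and.
    - apply (definable_le (TNum 0) (TVar 3)).
    - apply (definable_state_eq N _ _ (Hcoded 2 1 0 (TNum 0))%nat (state_dfun_drop N S 4 HS)).
    - apply (definable_state_eq N _ _ (Hcoded 2 1 0 (TVar 3))%nat (state_dfun_drop N T 4 HT)).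
    - apply definable_all, HStep.
    - apply definable_not, (definable_cbeval N _ b (Hcoded 2 1 0 (TVar 3))%nat Hb). }
  apply (definable_ext _ _ (definable_ex _ (definable_ex _ (definable_ex _ (definable_ex _ HRun))))).
  intro e. rewrite (exec_while_iff_coded N) by (auto; apply (proj1 HS)).
  reflexivity.
Qed.

Lemma exec_definable_of_bound c N : (com_loc_bound c <= N)%nat -> exec_definable N c.
Proof.
  induction c; cbn [com_loc_bound]; intro Hc.
  - apply exec_definable_skip.
  - apply exec_definable_assign; lia.
  - apply exec_definable_seq; [lia | apply IHc1 | apply IHc2]; lia.
  - apply exec_definable_if; [lia | apply IHc1 | apply IHc2]; lia.
  - apply exec_definable_while; [lia | lia | apply IHc]; lia.
  - apply exec_definable_par; [lia | lia | apply IHc1 | apply IHc2]; lia.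
Qed.

(** * From arithmetic formulas to assertions *)

Local Open Scope nat_scope.

Fixpoint aexp_var_bound (a : aexp) : nat :=
  match a with
  | ANum _ | ALoc _ => 0
  | AVar i => S i
  | APlus a b | AMinus a b | AMult a b => Nat.max (aexp_var_bound a) (aexp_var_bound b)
  end.

Fixpoint assn_var_bound (A : assn) : nat :=
  match A with
  | ATrue | AFalse => 0
  | AEq a b | ALe a b => Nat.max (aexp_var_bound a) (aexp_var_bound b)
  | ANot A => assn_var_bound A
  | AAnd A C | AOr A C | AImp A C => Nat.max (assn_var_bound A) (assn_var_bound C)
  | AForall i A | AExists i A => Nat.max (S i) (assn_var_bound A)
  end.

Lemma aeval_agree a M I J s :
  aexp_var_bound a <= M -> (forall i, i < M -> I i = J i) -> aeval I s a = aeval J s a.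
Proof.
  intros Ha H; induction a; cbn [aexp_var_bound aeval] in *;
    rewrite ?IHa1, ?IHa2 by lia; auto with arith.
Qed.

Lemma sat_agree A : forall M I J s,
  assn_var_bound A <= M -> (forall i, i < M -> I i = J i) -> (sat I s A <-> sat J s A).
Proof.
  induction A; intros M I J s HA H; cbn [assn_var_bound sat] in *;
    rewrite ?(aeval_agree a M I J s), ?(aeval_agree a0 M I J s) by (auto; lia);
    try rewrite (IHA M I J s); try rewrite (IHA1 M I J s), (IHA2 M I J s); try tauto; try lia.
  all: assert (K : forall n, sat (upd_interp I i n) s A <-> sat (upd_interp J i n) s A)
         by (intro n; apply (IHA M); [lia | intros j Hj; unfold upd_interp; destruct (j =? i); auto]).
  all: setoid_rewrite K; reflexivity.
Qed.

Fixpoint tm_to_aexp (rho : nat -> aexp) (t : tm) : aexp :=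
  match t with
  | TVar n => rho n
  | TNum z => ANum z
  | TAdd a b => APlus (tm_to_aexp rho a) (tm_to_aexp rho b)
  | TSub a b => AMinus (tm_to_aexp rho a) (tm_to_aexp rho b)
  | TMul a b => AMult (tm_to_aexp rho a) (tm_to_aexp rho b)
  end.

(* [nx] is the first integer variable free for binding; [rho] must not mention it. *)
Fixpoint fm_to_assn (rho : nat -> aexp) (nx : Intvar) (f : fm) : assn :=
  match f with
  | FEq a b => AEq (tm_to_aexp rho a) (tm_to_aexp rho b)
  | FLe a b => ALe (tm_to_aexp rho a) (tm_to_aexp rho b)
  | FNot f => ANot (fm_to_assn rho nx f)
  | FAnd f g => AAnd (fm_to_assn rho nx f) (fm_to_assn rho nx g)
  | FOr f g => AOr (fm_to_assn rho nx f) (fm_to_assn rho nx g)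
  | FImp f g => AImp (fm_to_assn rho nx f) (fm_to_assn rho nx g)
  | FEx f => AExists nx (fm_to_assn (scons (AVar nx) rho) (S nx) f)
  | FAll f => AForall nx (fm_to_assn (scons (AVar nx) rho) (S nx) f)
  end.

Lemma aeval_tm_to_aexp rho t I s :
  aeval I s (tm_to_aexp rho t) = teval (fun j => aeval I s (rho j)) t.
Proof. induction t; simpl; congruence. Qed.

Lemma env_upd_fresh rho nx I s z :
  (forall j, aexp_var_bound (rho j) <= nx) ->
  (fun j => aeval (upd_interp I nx z) s (scons (AVar nx) rho j)) = scons z (fun j => aeval I s (rho j)).
Proof.
  intro Hrho; apply functional_extensionality; intros [|j]; simpl.
  - unfold upd_interp; now rewrite Nat.eqb_refl.
  - apply (aeval_agree _ nx); auto. intros i Hi; unfold upd_interp.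
    destruct (Nat.eqb_spec i nx); [lia | reflexivity].
Qed.

Lemma sat_fm_to_assn f : forall rho nx I s,
  (forall j, aexp_var_bound (rho j) <= nx) ->
  (sat I s (fm_to_assn rho nx f) <-> fsat (fun j => aeval I s (rho j)) f).
Proof.
  induction f; intros rho nx I s Hrho; simpl; rewrite ?aeval_tm_to_aexp;
    try rewrite (IHf rho nx); try rewrite (IHf1 rho nx), (IHf2 rho nx); try tauto.
  all: assert (Hup : forall j, aexp_var_bound (scons (AVar nx) rho j) <= S nx)
         by (intros [|j]; simpl; [lia | specialize (Hrho j); lia]).
  all: setoid_rewrite (IHf _ _ _ _ Hup); setoid_rewrite (env_upd_fresh rho nx I s _ Hrho).
  all: reflexivity.
Qed.

Fixpoint aexp_subst_loc (sg : Loc -> aexp) (a : aexp) : aexp :=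
  match a with
  | ANum n => ANum n
  | ALoc X => sg X
  | AVar i => AVar i
  | APlus a b => APlus (aexp_subst_loc sg a) (aexp_subst_loc sg b)
  | AMinus a b => AMinus (aexp_subst_loc sg a) (aexp_subst_loc sg b)
  | AMult a b => AMult (aexp_subst_loc sg a) (aexp_subst_loc sg b)
  end.

Fixpoint assn_subst_loc (sg : Loc -> aexp) (A : assn) : assn :=
  match A with
  | ATrue => ATrue
  | AFalse => AFalse
  | AEq a b => AEq (aexp_subst_loc sg a) (aexp_subst_loc sg b)
  | ALe a b => ALe (aexp_subst_loc sg a) (aexp_subst_loc sg b)
  | ANot A => ANot (assn_subst_loc sg A)
  | AAnd A C => AAnd (assn_subst_loc sg A) (assn_subst_loc sg C)
  | AOr A C => AOr (assn_subst_loc sg A) (assn_subst_loc sg C)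
  | AImp A C => AImp (assn_subst_loc sg A) (assn_subst_loc sg C)
  | AForall i A => AForall i (assn_subst_loc sg A)
  | AExists i A => AExists i (assn_subst_loc sg A)
  end.

Lemma aeval_subst_loc a sg I s :
  aeval I s (aexp_subst_loc sg a) = aeval I (fun X => aeval I s (sg X)) a.
Proof. induction a; simpl; congruence. Qed.

Lemma sat_subst_loc A : forall M sg I s,
  assn_var_bound A <= M ->
  (forall X I J, (forall i, M <= i -> I i = J i) -> aeval I s (sg X) = aeval J s (sg X)) ->
  (sat I s (assn_subst_loc sg A) <-> sat I (fun X => aeval I s (sg X)) A).
Proof.
  induction A; intros M sg I s HA Hsg; cbn [assn_var_bound assn_subst_loc sat] in *;
    rewrite ?aeval_subst_loc; try rewrite (IHA M); try rewrite (IHA1 M), (IHA2 M);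
    try tauto; try lia.
  all: assert (K : forall n, (fun X => aeval (upd_interp I i n) s (sg X)) = (fun X => aeval I s (sg X)))
         by (intro n; apply functional_extensionality; intro X; apply Hsg; intros j Hj;
             unfold upd_interp; destruct (Nat.eqb_spec j i); [lia | reflexivity]).
  all: setoid_rewrite (IHA M); auto; try lia; setoid_rewrite K; reflexivity.
Qed.

Fixpoint forall_block (M N : nat) (A : assn) : assn :=
  match N with O => A | S n => forall_block M n (AForall (M + n) A) end.

Definition upd_block (I : interp) (M N : nat) (v : nat -> Z) : interp :=
  fun i => if andb (M <=? i) (i <? M + N) then v (i - M) else I i.

Lemma upd_block_zero I M v : upd_block I M 0 v = I.
Proof.
  apply functional_extensionality; intro i; unfold upd_block.
  destruct (Nat.leb_spec M i), (Nat.ltb_spec i (M + 0)); simpl; auto; lia.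
Qed.

Lemma upd_block_succ I M N v :
  upd_block I M (S N) v = upd_interp (upd_block I M N v) (M + N) (v N).
Proof.
  apply functional_extensionality; intro i; unfold upd_block, upd_interp.
  destruct (Nat.eqb_spec i (M + N)), (Nat.leb_spec M i), (Nat.ltb_spec i (M + N)),
    (Nat.ltb_spec i (M + S N)); simpl; auto; try lia.
  subst; f_equal; lia.
Qed.

Lemma upd_block_ext I M N v w :
  (forall j, j < N -> v j = w j) -> upd_block I M N v = upd_block I M N w.
Proof.
  intro H; apply functional_extensionality; intro i; unfold upd_block.
  destruct (Nat.leb_spec M i), (Nat.ltb_spec i (M + N)); simpl; auto. apply H; lia.
Qed.

Lemma sat_forall_block N : forall M A I s,
  sat I s (forall_block M N A) <-> forall v, sat (upd_block I M N v) s A.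
Proof.
  induction N as [|N IH]; intros M A I s; simpl.
  - setoid_rewrite upd_block_zero. split; [auto | intro H; exact (H (fun _ => 0%Z))].
  - rewrite IH. simpl. split.
    + intros H v. rewrite upd_block_succ. apply H.
    + intros H v z. specialize (H (fun j => if j <? N then v j else z)).
      rewrite upd_block_succ, Nat.ltb_irrefl in H.
      erewrite upd_block_ext; [exact H|].
      intros j Hj; simpl; destruct (Nat.ltb_spec j N); [reflexivity | lia].
Qed.

Lemma wp_iff_post c B N I s :
  com_loc_bound c <= N ->
  wp I c B s <-> forall v, exec c (restrict N s) (restrict N v) -> sat I (merge N s v) B.
Proof.
  intro Hc; split.
  - intros H v Hex. apply H. apply exec_restrict_iff with N; auto. split.
    + intros X HX; unfold merge. destruct (Nat.ltb_spec X N); [lia | reflexivity].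
    + replace (restrict N (merge N s v)) with (restrict N v); auto.
      apply restrict_ext; intros X HX; symmetry; apply merge_below, HX.
  - intros H s' Hex. apply exec_restrict_iff with (N := N) in Hex as [Hout Hex]; auto.
    specialize (H s' Hex).
    replace (merge N s s') with s' in H; auto.
    apply functional_extensionality; intro X; unfold merge.
    destruct (Nat.ltb_spec X N); [reflexivity | now rewrite Hout].
Qed.

(* The pre-state in slots [0, N) is read from the locations, the post-state in
   slots [N, 2N) from the integer variables [M, M + N). *)
Definition pre_post_var (N M : nat) (j : nat) : aexp :=
  if j <? N then ALoc j else if j <? N + N then AVar (M + (j - N)) else ANum 0.

Definition post_loc (N M : nat) (X : Loc) : aexp :=
  if X <? N then AVar (M + X) else ALoc X.

Lemma upd_block_inside I M N v X : X < N -> upd_block I M N v (M + X) = v X.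
Proof.
  intro HX; unfold upd_block.
  destruct (Nat.leb_spec M (M + X)), (Nat.ltb_spec (M + X) (M + N)); simpl; try lia.
  f_equal; lia.
Qed.

Lemma upd_block_below I M N v i : i < M -> upd_block I M N v i = I i.
Proof. intro Hi; unfold upd_block. destruct (Nat.leb_spec M i); simpl; [lia | reflexivity]. Qed.

Lemma sat_pre_post (R : state -> state -> Prop) f N M I s v :
  (forall e, fsat e f <-> R (restrict N e) (restrict N (drop N e))) ->
  sat (upd_block I M N v) s (fm_to_assn (pre_post_var N M) (M + N) f) <->
  R (restrict N s) (restrict N v).
Proof.
  intro Hf. rewrite sat_fm_to_assn, Hf.
  - replace (restrict N _) with (restrict N s).
    replace (restrict N (drop N _)) with (restrict N v).
    reflexivity.
    + apply restrict_ext; intros X HX; unfold drop, pre_post_var.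
      destruct (Nat.ltb_spec (N + X) N), (Nat.ltb_spec (N + X) (N + N)); try lia.
      simpl. rewrite <- (upd_block_inside I M N v X HX). f_equal. lia.
    + apply restrict_ext; intros X HX; unfold pre_post_var.
      destruct (Nat.ltb_spec X N); [reflexivity | lia].
  - intro j; unfold pre_post_var.
    destruct (Nat.ltb_spec j N), (Nat.ltb_spec j (N + N)); simpl; lia.
Qed.

Lemma sat_post N M B I s v :
  assn_var_bound B <= M ->
  sat (upd_block I M N v) s (assn_subst_loc (post_loc N M) B) <-> sat I (merge N s v) B.
Proof.
  intro HB. rewrite (sat_subst_loc B M); auto.
  - replace (fun X => aeval (upd_block I M N v) s (post_loc N M X)) with (merge N s v).
    + apply (sat_agree B M); auto. intros; apply upd_block_below; auto.
    + apply functional_extensionality; intro X; unfold merge, post_loc.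
      destruct (Nat.ltb_spec X N); simpl; [symmetry; apply upd_block_inside | ]; auto.
  - intros X J J' H; unfold post_loc. destruct (Nat.ltb_spec X N); simpl; auto.
    apply H; lia.
Qed.

Theorem mainTheorem6 :
  forall (c : com) (B : assn),
    exists w : assn,
      forall (I : interp) (s : state), sat I s w <-> wp I c B s.
Proof.
  intros c B.
  set (N := com_loc_bound c). set (M := assn_var_bound B).
  destruct (exec_definable_of_bound c N (le_n N) _ _
              (state_dfun_restrict N 0) (state_dfun_restrict N N)) as [f Hf].
  exists (forall_block M N (AImp (fm_to_assn (pre_post_var N M) (M + N) f)
                                 (assn_subst_loc (post_loc N M) B))).
  intros I s. rewrite sat_forall_block, (wp_iff_post c B N) by reflexivity.
  split; intros H v; specialize (H v); cbn [sat] in *;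
    rewrite (sat_pre_post (exec c) f N M I s v Hf), (sat_post N M B I s v (le_n M)) in *; exact H.
Qed.
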